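(* Run WSU-UX with $K=2$ and any valid $(\eta,\gamma)$ on the two-phase loss sequence. Let $t_0>T_1$ be a round with $0<\pi_{t_0,1}\le\frac14$. Suppose arm 2 is pulled (i.e. $I_s=2$) in rounds $t_1<t_2<\dots<t_m$ with $t_0\le t_1$ and $t_m\le T$, where $m\ge \frac{2}{\eta}\cdot\frac{1}{1-2\pi_{t_0,1}}$. Then $\pi_{t_m+1,1}\ge 2\pi_{t_0,1}$.
   Context: WSU-UX. Fix integers $K\ge 2$ and $T\ge 1$ and hyperparameters $\eta,\gamma$. The pair $(\eta,\gamma)$ is called valid if $\eta,\gamma\in(0,1/2)$ and $\eta K/\gamma\le 1/2$. Given a fixed loss sequence $\ell_t\in[0,1]^K$, WSU-UX sets $\pi_{1,i}=1/K$ and in each round $t$: forms $\tilde\pi_{t,i}=(1-\gamma)\pi_{t,i}+\gamma/K$; draws $I_t$ with $\Pr(I_t=i\mid\mathcal F_{t-1})=\tilde\pi_{t,i}$; sets $\hat\ell_{t,i}=\ell_{t,i}\mathbf 1[I_t=i]/\tilde\pi_{t,i}$; and updates $\pi_{t+1,i}=\pi_{t,i}\bigl(1-\eta(\hat\ell_{t,i}-\sum_{j}\pi_{t,j}\hat\ell_{t,j})\bigr)$; $\mathcal F_t$ is the history generated by $I_1,\dots,I_t$. Two-phase loss sequence ($K=2$, $T$ a multiple of $100$, $T_1=T/100$): $\ell_{t,1}=1,\ell_{t,2}=0$ for $1\le t\le T_1$ and $\ell_{t,1}=0,\ell_{t,2}=1$ for $T_1<t\le T$. (For $t>T_1$, rounds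 in which arm 1 is pulled leave $\pi_t$ unchanged.) *)

(* WSU-UX along a fixed realization of the pulls. *)
From mathcomp Require Import all_boot all_order all_algebra.
Set Implicit Arguments. Unset Strict Implicit. Unset Printing Implicit Defensive.
Import Order.TTheory GRing.Theory Num.Theory.
Local Open Scope ring_scope.

Section WSU.
Variables (R : realFieldType) (K : nat) (eta gamma : R).
Variable loss : nat -> 'I_K -> R.
Variable I : nat -> 'I_K.

Definition valid_params : Prop :=
  [/\ 0 < eta, eta < 1/2, 0 < gamma, gamma < 1/2 & eta * K%:R / gamma <= 1/2].

Definition wsu_tilde (p : 'I_K -> R) (i : 'I_K) : R :=
  (1 - gamma) * p i + gamma / K%:R.

Definition wsu_lhat (t : nat) (p : 'I_K -> R) (i : 'I_K) : R :=
  loss t i * (I t == i)%:R / wsu_tilde p i.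

Definition wsu_step (t : nat) (p : 'I_K -> R) : 'I_K -> R :=
  fun i => p i * (1 - eta * (wsu_lhat t p i - \sum_(j < K) p j * wsu_lhat t p j)).

(* wsu_pi t = pi_t for t >= 1 (rounds numbered from 1); wsu_pi 0 is junk. *)
Fixpoint wsu_pi (t : nat) : 'I_K -> R :=
  match t with
  | 0 | 1 => fun _ => 1 / K%:R
  | t'.+1 => wsu_step t' (wsu_pi t')
  end.
End WSU.

(* Two-phase loss sequence for K = 2, T1 = T/100.  Arm 1 of the paper is
   the ordinal 0, arm 2 is the ordinal 1. *)
Definition two_phase_loss (R : realFieldType) (T : nat) (t : nat) (i : 'I_2) : R :=
  if (t <= T %/ 100)%N then (if val i == 0%N then 1 else 0)
  else (if val i == 0%N then 0 else 1).

Definition arm1 : 'I_2 := @Ordinal 2 0 isT.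
Definition arm2 : 'I_2 := @Ordinal 2 1 isT.

From mathcomp Require Import all_boot all_order all_algebra.
From mathcomp Require Import ring lra.
Import Order.TTheory GRing.Theory Num.Theory.
Local Open Scope ring_scope.
Set Implicit Arguments. Unset Strict Implicit.

(* In the second phase arm 1 has loss 0, so the update of its weight reads
   pi_{t+1,1} = pi_{t,1} + eta pi_{t,1} (1 - pi_{t,1}) lhat_{t,2}, where lhat_{t,2} >= 0,
   and lhat_{t,2} >= 1 whenever arm 2 is pulled (as tilde pi_{t,2} <= 1).  Thus pi_{.,1}
   never decreases, and each pull of arm 2 raises its current value x by eta x (1 - x).
   With a = pi_{t0,1} <= 1/2, for a <= x < 2a we have x (1 - x) >= a (1 - 2a), so after
   k pulls pi_{.,1} >= min(2a, a + k eta a (1 - 2a)); for m >= 2 / (eta (1 - 2a)) the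
   minimum is 2a.  That 0 <= pi <= 1 throughout is the simplex invariant of WSU-UX, whose
   nonnegativity part rests on eta K / gamma <= 1/2. *)

Section WSUInvariants.
Variables (R : realFieldType) (K : nat) (eta gamma : R).
Variables (loss : nat -> 'I_K -> R) (I : nat -> 'I_K).

Local Notation step := (wsu_step eta gamma loss I).
Local Notation pi := (wsu_pi eta gamma loss I).

Lemma wsu_piS t : (0 < t)%N -> pi t.+1 = step t (pi t).
Proof. by case: t. Qed.

Lemma wsu_pi_ind (Q : ('I_K -> R) -> Prop) :
  Q (fun _ => 1 / K%:R) -> (forall t p, Q p -> Q (step t p)) -> forall t, Q (pi t).
Proof.
move=> Q0 QS; elim=> [|[|t] IH] //.
by rewrite wsu_piS //; apply: QS.
Qed.

Lemma sum_wsu_step t (p : 'I_K -> R) : \sum_i p i = 1 -> \sum_i step t p i = 1.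
Proof.
move=> p1; rewrite /wsu_step.
set h := wsu_lhat gamma loss I t p; set S := \sum_(j < K) p j * h j.
rewrite (eq_bigr (fun i => p i - eta * (p i * h i) + eta * S * p i)) => [|i _];
  last by ring.
by rewrite !big_split /= sumrN -!mulr_sumr -/S p1 mulr1 subrK.
Qed.

Hypothesis K_gt0 : (0 < K)%N.

Lemma sum_wsu_pi t : \sum_i pi t i = 1.
Proof.
apply: (@wsu_pi_ind (fun p => \sum_i p i = 1)) => [|s p]; last exact: sum_wsu_step.
by rewrite sumr_const card_ord -[1 / _ *+ _]mulr_natr div1r mulVf // pnatr_eq0 -lt0n.
Qed.

Hypothesis valid : valid_params K eta gamma.
Hypothesis loss01 : forall t i, 0 <= loss t i <= 1.

Lemma wsu_tilde_ge (p : 'I_K -> R) i :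
  (forall j, 0 <= p j) -> gamma / K%:R <= wsu_tilde gamma p i.
Proof.
case: valid => _ _ _ g1 _ p0.
rewrite /wsu_tilde lerDr mulr_ge0 // subr_ge0 ltW // (lt_trans g1) //.
by rewrite ltr_pdivrMr ?mul1r ?ltr1n.
Qed.

Lemma wsu_tilde_gt0 (p : 'I_K -> R) i :
  (forall j, 0 <= p j) -> 0 < wsu_tilde gamma p i.
Proof.
move=> p0; apply: lt_le_trans (wsu_tilde_ge i p0).
by case: valid => _ _ g0 _ _; rewrite divr_gt0 // ltr0n.
Qed.

Lemma wsu_lhat_ge0 t (p : 'I_K -> R) i :
  (forall j, 0 <= p j) -> 0 <= wsu_lhat gamma loss I t p i.
Proof.
move=> p0; have /andP[l0 _] := loss01 t i.
by rewrite divr_ge0 ?mulr_ge0 ?ler0n // ltW // wsu_tilde_gt0.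
Qed.

Lemma eta_wsu_lhat_le_half t (p : 'I_K -> R) i :
  (forall j, 0 <= p j) -> eta * wsu_lhat gamma loss I t p i <= 1/2.
Proof.
move=> p0; case: valid => e0 _ g0 _ eKg.
have d0 := wsu_tilde_gt0 i p0; have dge := wsu_tilde_ge i p0.
have k0 : 0 < K%:R :> R by rewrite ltr0n.
rewrite ler_pdivrMr // in eKg; rewrite ler_pdivrMr // in dge.
have /andP[l0 l1] := loss01 t i.
have le_d : eta * loss t i <= 1/2 * wsu_tilde gamma p i.
  by rewrite -(ler_pM2r k0); nra.
rewrite /wsu_lhat mulrA ler_pdivrMr //.
case: (I t == i) => /=; rewrite ?mulr1 ?mulr0; first exact: le_d.
by apply: mulr_ge0; [lra | exact: ltW].
Qed.

Lemma wsu_step_ge0 t (p : 'I_K -> R) :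
  (forall j, 0 <= p j) -> forall i, 0 <= step t p i.
Proof.
move=> p0 i; rewrite /wsu_step mulr_ge0 //.
have S0 : 0 <= \sum_j p j * wsu_lhat gamma loss I t p j.
  by apply: sumr_ge0 => j _; rewrite mulr_ge0 ?wsu_lhat_ge0.
have eS : 0 <= eta * \sum_j p j * wsu_lhat gamma loss I t p j.
  by case: valid => e0 _ _ _ _; rewrite mulr_ge0 // ltW.
have := eta_wsu_lhat_le_half t i p0; rewrite mulrBr; lra.
Qed.

Lemma wsu_pi_ge0 t i : 0 <= pi t i.
Proof.
move: i; apply: (@wsu_pi_ind (fun p => forall i, 0 <= p i)) => [i|s p].
  by rewrite divr_ge0 ?ler0n.
exact: wsu_step_ge0.
Qed.

End WSUInvariants.

Lemma sum_ord2 (V : nmodType) (F : 'I_2 -> V) : \sum_j F j = F arm1 + F arm2.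
Proof. by rewrite big_ord_recl big_ord1; congr (F _ + F _); apply: val_inj. Qed.

Lemma two_phase_loss01 (R : realFieldType) T t i : 0 <= two_phase_loss R T t i <= 1.
Proof. by rewrite /two_phase_loss; do 2 case: ifP => _; rewrite ?ler01 ?lexx. Qed.

Lemma logistic_min_step (R : realFieldType) (eta a x : R) (n : nat) :
  0 <= eta -> 0 <= a -> a <= 1/2 -> x <= 1 ->
  Num.min (2 * a) (a + n%:R * (eta * (a * (1 - 2 * a)))) <= x ->
  Num.min (2 * a) (a + n.+1%:R * (eta * (a * (1 - 2 * a)))) <= x + eta * (x * (1 - x)).
Proof.
move=> e0 a0 a1 x1; rewrite !ge_min -(natr1 n) mulrDl mul1r.
have c0 : 0 <= eta * (a * (1 - 2 * a)) by rewrite !mulr_ge0 //; lra.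
have nc0 : 0 <= n%:R * (eta * (a * (1 - 2 * a))) by rewrite mulr_ge0.
have [x_ge_2a _ | x_lt_2a /= bound] := lerP (2 * a) x.
  have incr0 : 0 <= eta * (x * (1 - x)) by apply: mulr_ge0 => //; apply: mulr_ge0; lra.
  by apply/orP; left; lra.
(* For [a <= x < 2a], [x (1 - x) - a (1 - 2a) = (x - a)(1 - x) + a (2a - x)]. *)
have growth : a * (1 - 2 * a) <= x * (1 - x) by nra.
by apply/orP; right; nra.
Qed.

Section TwoPhase.
Variables (R : realFieldType) (T : nat) (eta gamma : R) (I : nat -> 'I_2).
Hypothesis valid : valid_params 2 eta gamma.

Local Notation loss := (two_phase_loss R T).
Local Notation pi := (wsu_pi eta gamma loss I).
Local Notation T1 := (T %/ 100)%N.

Lemma wsu_pi_arm2 t : pi t arm2 = 1 - pi t arm1.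
Proof. by rewrite -(sum_wsu_pi eta gamma loss I _ t) // sum_ord2 addrAC subrr add0r. Qed.

Let pi_ge0 t i : 0 <= pi t i := wsu_pi_ge0 I isT valid (@two_phase_loss01 R T) t i.

Lemma wsu_pi_arm1_le1 t : pi t arm1 <= 1.
Proof. by have := pi_ge0 t arm2; rewrite wsu_pi_arm2 subr_ge0. Qed.

Lemma wsu_pi_arm1_phase2 t : (T1 < t)%N ->
  pi t.+1 arm1 = pi t arm1 + eta * (pi t arm1 * (1 - pi t arm1))
                             * wsu_lhat gamma loss I t (pi t) arm2.
Proof.
move=> Ht; rewrite wsu_piS ?(leq_ltn_trans _ Ht) // /wsu_step sum_ord2.
have -> : wsu_lhat gamma loss I t (pi t) arm1 = 0.
  by rewrite /wsu_lhat /two_phase_loss leqNgt Ht !mul0r.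
by rewrite wsu_pi_arm2; ring.
Qed.

Lemma wsu_lhat_arm2_ge1 t : (T1 < t)%N -> I t = arm2 ->
  1 <= wsu_lhat gamma loss I t (pi t) arm2.
Proof.
move=> Ht It; have d0 := wsu_tilde_gt0 (K:=2) isT valid arm2 (pi_ge0 t).
rewrite /wsu_lhat /two_phase_loss leqNgt Ht It eqxx mulr1 ler_pdivlMr // mul1r.
case: valid => _ _ g0 g1 _; have := pi_ge0 t arm1.
by rewrite /wsu_tilde wsu_pi_arm2; nra.
Qed.

Let logistic_incr_ge0 t : 0 <= eta * (pi t arm1 * (1 - pi t arm1)).
Proof.
have p0 := pi_ge0 t arm1; have p1 := wsu_pi_arm1_le1 t.
by case: valid => e0 _ _ _ _; apply: mulr_ge0; [exact: ltW | apply: mulr_ge0; lra].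
Qed.

Lemma wsu_pi_arm1_nondecr t : (T1 < t)%N -> pi t arm1 <= pi t.+1 arm1.
Proof.
move=> Ht; rewrite wsu_pi_arm1_phase2 // lerDl mulr_ge0 ?logistic_incr_ge0 //.
exact: (wsu_lhat_ge0 (eta := eta) I isT valid (@two_phase_loss01 R T) t arm2 (pi_ge0 t)).
Qed.

Lemma wsu_pi_arm1_pull2 t : (T1 < t)%N -> I t = arm2 ->
  pi t arm1 + eta * (pi t arm1 * (1 - pi t arm1)) <= pi t.+1 arm1.
Proof.
move=> Ht It; rewrite wsu_pi_arm1_phase2 // lerD2l.
by rewrite ler_peMr ?logistic_incr_ge0 ?wsu_lhat_arm2_ge1.
Qed.

Lemma wsu_pi_arm1_mono s t : (T1 < s)%N -> (s <= t)%N -> pi s arm1 <= pi t arm1.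
Proof.
move=> Hs; elim: t => [|t IH]; first by rewrite leqn0 => /eqP ->.
rewrite leq_eqVlt ltnS => /orP[/eqP <- // | st].
exact: le_trans (IH st) (wsu_pi_arm1_nondecr (leq_trans Hs st)).
Qed.

Section PullSequence.
Variables (t0 m : nat) (tt : nat -> nat).
Hypothesis t0_phase2 : (T1 < t0)%N.
Hypothesis a_le_half : pi t0 arm1 <= 1/2.
Hypothesis tt_incr : forall k, (1 <= k)%N -> (k < m)%N -> (tt k < tt k.+1)%N.
Hypothesis t0_le_tt1 : (t0 <= tt 1)%N.
Hypothesis pulls_arm2 : forall k, (1 <= k)%N -> (k <= m)%N -> I (tt k) = arm2.

Local Notation a := (pi t0 arm1).
Local Notation lower_bound n := (Num.min (2 * a) (a + n%:R * (eta * (a * (1 - 2 * a))))).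

Lemma pull_time_phase2 k : (k < m)%N -> (T1 < tt k.+1)%N.
Proof.
elim: k => [|k IH] km; first exact: leq_trans t0_phase2 t0_le_tt1.
exact: ltn_trans (IH (ltnW km)) (tt_incr _ km).
Qed.

Lemma lower_bound_after_pull k : (k < m)%N ->
  lower_bound k <= pi (tt k.+1) arm1 -> lower_bound k.+1 <= pi (tt k.+1).+1 arm1.
Proof.
move=> km before.
apply: le_trans (wsu_pi_arm1_pull2 (pull_time_phase2 km) (pulls_arm2 _ km)) => //.
case: valid => e0 _ _ _ _.
exact: logistic_min_step (ltW e0) (pi_ge0 _ _) a_le_half (wsu_pi_arm1_le1 _) before.
Qed.

Lemma lower_bound_before_pull k : (k < m)%N -> lower_bound k <= pi (tt k.+1) arm1.
Proof.
elim: k => [|k IH] km.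
  by rewrite mul0r addr0 ge_min wsu_pi_arm1_mono ?orbT.
apply: le_trans (lower_bound_after_pull (ltnW km) (IH (ltnW km))) _.
exact: wsu_pi_arm1_mono (leqW (pull_time_phase2 (ltnW km))) (tt_incr _ km).
Qed.

Lemma lower_bound_after_last_pull : (0 < m)%N -> lower_bound m <= pi (tt m).+1 arm1.
Proof.
move=> m0; have km : (m.-1 < m)%N by rewrite ltn_predL.
by have := lower_bound_after_pull km (lower_bound_before_pull km); rewrite prednK.
Qed.

End PullSequence.

End TwoPhase.

Theorem mainTheorem15 (R : realFieldType) (T : nat) (eta gamma : R)
  (I : nat -> 'I_2) (t0 m : nat) (tt : nat -> nat) :
  (1 <= T)%N -> (100 %| T)%N ->
  valid_params 2 eta gamma ->
  (T %/ 100 < t0)%N ->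
  0 < wsu_pi eta gamma (two_phase_loss R T) I t0 arm1 ->
  wsu_pi eta gamma (two_phase_loss R T) I t0 arm1 <= 1/4 ->
  (forall k, (1 <= k)%N -> (k < m)%N -> (tt k < tt k.+1)%N) ->
  (t0 <= tt 1%N)%N -> (tt m <= T)%N ->
  (forall k, (1 <= k)%N -> (k <= m)%N -> I (tt k) = arm2) ->
  (2 / eta) * (1 / (1 - 2 * wsu_pi eta gamma (two_phase_loss R T) I t0 arm1))
    <= m%:R ->
  2 * wsu_pi eta gamma (two_phase_loss R T) I t0 arm1
    <= wsu_pi eta gamma (two_phase_loss R T) I (tt m).+1 arm1.
Proof.
move=> _ _ valid Ht0 _ a_quarter tt_incr t0_le_tt1 _ pulls.
have a0 := wsu_pi_ge0 I isT valid (@two_phase_loss01 R T) t0 arm1.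
set a := wsu_pi _ _ _ _ t0 arm1 in a0 a_quarter *.
have [e0 _ _ _ _] := valid.
rewrite mulf_div mulr1 ler_pdivrMr; last by rewrite mulr_gt0 //; lra.
move=> many_pulls; have m0 : (0 < m)%N.
  by rewrite lt0n; apply/eqP => m0; move: many_pulls; rewrite m0 mul0r; lra.
have a_half : a <= 1/2 by lra.
have := lower_bound_after_last_pull valid Ht0 a_half tt_incr t0_le_tt1 pulls m0.
rewrite ge_min => /orP[// | bound].
apply: le_trans bound; have := ler_wpM2l a0 many_pulls.
have -> : a * (m%:R * (eta * (1 - 2 * a))) = m%:R * (eta * (a * (1 - 2 * a))) by ring.
by rewrite -/a; lra.
Qed.
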